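(* Assume $\mathcal{T}$ is a tree. There is a constant $m_1$ such that for all measurable locally bounded functions $w_i,x_i,y_i$ ($i\in\mathcal{I}$), $z_j$ ($j\in\mathcal{J}$), $\psi_{ij}$ (with $\psi_{ij}=0$ for $i\not\sim j$) on $[0,\infty)$ satisfying $$x_i(t)=w_i(t)-\sum_{j\in\mathcal{J}}\mu_{ij}\int_0^t\psi_{ij}(s)ds-\theta_i\int_0^ty_i(s)ds,\quad \sum_{j\in\mathcal{J}}\psi_{ij}=x_i-y_i\ \ (i\in\mathcal{I}),\quad \sum_{i\in\mathcal{I}}\psi_{ij}=-z_j\ \ (j\in\mathcal{J}),$$ we have $$\|\mathfrak{J}\psi(t)\|+\|x(t)\|\le m_1\big(\|w\|_t^*+\|\mathfrak{J}y\|_t^*+\|\mathfrak{J}z\|_t^*\big),\qquad t\ge0;$$ $m_1$ does not depend on $\psi,w,x,y,z$ or $t$.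
   Context: $\mathcal{I}=\{1,\dots,I\}$, $\mathcal{J}=\{I+1,\dots,I+J\}$, $\mathcal{E}\subset\mathcal{I}\times\mathcal{J}$, $i\sim j$ iff $(i,j)\in\mathcal{E}$; $\mathcal{T}$ is the bipartite graph with vertices $\mathcal{I}\cup\mathcal{J}$ and edges $\mathcal{E}$. Constants $\mu_{ij}>0$ for $(i,j)\in\mathcal{E}$, $\mu_{ij}=0$ otherwise, $\theta_i\ge0$. $\mathfrak{J}f(t)=\int_0^tf(s)ds$ (applied componentwise to vector/array-valued functions). $\|a\|$ denotes the sum of absolute values of the entries of a vector or array, and $\|f\|_t^*=\sup_{0\le s\le t}\|f(s)\|$. *)

From HB Require Import structures.
From mathcomp Require Import all_boot all_order all_algebra.
From mathcomp Require Import all_classical all_reals all_analysis.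
Set Implicit Arguments. Unset Strict Implicit. Unset Printing Implicit Defensive.
Import Order.TTheory GRing.Theory Num.Theory.
Local Open Scope classical_set_scope.
Local Open Scope ring_scope.

Definition vert (nI nJ : nat) : finType := ('I_nI + 'I_nJ)%type.

Definition badj (nI nJ : nat) (E : 'I_nI -> 'I_nJ -> bool) : rel (vert nI nJ) :=
  fun u v => match u, v with
             | inl i, inr j => E i j
             | inr j, inl i => E i j
             | _, _ => false
             end.

Definition connectedG (nI nJ : nat) (E : 'I_nI -> 'I_nJ -> bool) : Prop :=
  forall u v : vert nI nJ, connect (badj E) u v.

Definition acyclicG (nI nJ : nat) (E : 'I_nI -> 'I_nJ -> bool) : Prop :=
  forall p : seq (vert nI nJ), uniq p -> (3 <= size p)%N -> ~~ cycle (badj E) p.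

Definition is_tree (nI nJ : nat) (E : 'I_nI -> 'I_nJ -> bool) : Prop :=
  (0 < nI + nJ)%N /\ connectedG E /\ acyclicG E.

Definition integ0 {R : realType} (f : R -> R) (t : R) : R :=
  Rintegral (@lebesgue_measure R) `[0, t] f.

Definition meas_locbdd {R : realType} (f : R -> R) : Prop :=
  measurable_fun (`[0%R, +oo[%classic : set R) f /\
  forall t, 0 <= t -> exists M : R, forall s, 0 <= s <= t -> `|f s| <= M.

Definition supnorm {R : realType} (nf : R -> R) (t : R) : R :=
  sup [set nf s | s in `[0, t]].

From HB Require Import structures.
From mathcomp Require Import all_boot all_order all_algebra.
From mathcomp Require Import all_classical all_reals all_analysis.
From mathcomp Require Import ring lra.
Set Implicit Arguments. Unset Strict Implicit. Unset Printing Implicit Defensive.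
Import Order.TTheory GRing.Theory Num.Theory.
Local Open Scope classical_set_scope.
Local Open Scope ring_scope.

(* Write Psi = 𝔍psi.  Integrating the constraints gives sum_j Psi_ij = 𝔍x_i - 𝔍y_i
   and sum_i Psi_ij = -𝔍z_j, and x_i = w_i - sum_j mu_ij Psi_ij - theta_i 𝔍y_i.
   Call a quantity controlled if it is bounded by a constant, independent of the
   data, times N(T) = |w|*_T + |𝔍y|*_T + |𝔍z|*_T.  At a J-vertex j, Psi_ij is
   controlled as soon as every other Psi_i'j is.  At an I-vertex i, if every Psi_ij'
   with j' <> j is controlled, then X = 𝔍x_i solves x_i + mu_ij X = (controlled), and
   a maximum principle for this scalar equation bounds X by (controlled) / mu_ij;
   hence Psi_ij = X - (controlled) is controlled.  On a tree these two rules reach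
   every edge (a finite acyclic graph always has a leaf), and then x_i is controlled
   by its own equation. *)

Definition acyclic (T : finType) (r : rel T) :=
  forall p : seq T, uniq p -> (3 <= size p)%N -> ~~ cycle r p.

Section AcyclicGraph.
Variables (T : finType) (r : rel T).
Hypotheses (r_sym : symmetric r) (r_irr : irreflexive r) (r_acyclic : acyclic r).

Lemma acyclic_path_fresh (v u w : T) (p : seq T) :
  uniq [:: v, u & p] -> path r v (u :: p) -> w != u -> r v w ->
  w \notin [:: v, u & p].
Proof.
move=> uniq_p path_p wu rvw; apply/negP => w_in.
have wv : w != v by apply: contraTneq rvw => ->; rewrite r_irr.
have w_p : w \in p by move: w_in; rewrite !inE (negbTE wv) (negbTE wu).
case/splitPr: w_p uniq_p path_p => p1 p2 uniq_p path_p.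
have uniq_cyc : uniq (v :: rcons (u :: p1) w).
  apply: subseq_uniq uniq_p.
  have -> : [:: v, u & p1 ++ w :: p2] = (v :: rcons (u :: p1) w) ++ p2.
    by rewrite /= -cats1 -catA.
  exact: prefix_subseq.
have := r_acyclic uniq_cyc; rewrite /= size_rcons => /(_ isT) /negP; apply.
move: path_p; rewrite -cat_cons cat_path => /andP[path_p1 /= /andP[rw _]].
move: path_p1 => /= /andP[-> path_p1].
by rewrite !rcons_path path_p1 rw last_rcons r_sym rvw.
Qed.

Lemma leafless_acyclic_empty :
  (forall u v, r u v -> exists2 w, w != v & r u w) -> forall u v, ~~ r u v.
Proof.
move=> leafless u0 v0; apply/negP => r0.
have long_path n : exists v u p,
    [/\ uniq [:: v, u & p], path r v (u :: p) & size p = n].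
  elim: n => [|n [v [u [p [uniq_p path_p size_p]]]]].
    by exists v0, u0, [::]; rewrite /= r_sym r0 andbT inE; split => //;
      apply: contraTneq r0 => ->; rewrite r_irr.
  have [w wu rvw] := leafless v u (andP path_p).1.
  have w_fresh := acyclic_path_fresh uniq_p path_p wu rvw.
  exists w, v, (u :: p); split; last by rewrite /= size_p.
    by rewrite cons_uniq w_fresh uniq_p.
  by rewrite /= r_sym rvw; exact: path_p.
have [v [u [p [uniq_p _ size_p]]]] := long_path #|T|.
have := max_card (mem [:: v, u & p]).
by rewrite (card_uniqP uniq_p) /= size_p ltnNge leqnSn.
Qed.

End AcyclicGraph.

Section BipartiteTree.
Variables (nI nJ : nat) (E : 'I_nI -> 'I_nJ -> bool).

Lemma tree_edge_ind (P : 'I_nI -> 'I_nJ -> Prop) : acyclicG E ->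
  (forall i j, ~~ E i j -> P i j) ->
  (forall i j, E i j -> (forall j', j' != j -> P i j') -> P i j) ->
  (forall i j, E i j -> (forall i', i' != i -> P i' j) -> P i j) ->
  forall i j, P i j.
Proof.
move=> acyclicE P_non_edge P_at_I P_at_J.
have edge_of_notP i j : ~ P i j -> E i j.
  by move=> nP; apply: contraT => /P_non_edge.
pose bad : rel (vert nI nJ) := fun u v =>
  match u, v with
  | inl i, inr j | inr j, inl i => E i j && ~~ `[< P i j >]
  | _, _ => false
  end.
have bad_sym : symmetric bad by case=> [i|j] [i'|j'].
have bad_irr : irreflexive bad by case.
have bad_acyclic : acyclic bad.
  move=> p uniq_p size_p; apply: contraNN (acyclicE p uniq_p size_p).
  by apply: sub_cycle; case=> [i|j] [i'|j'] //= /andP[].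
have bad_leafless u v : bad u v -> exists2 w, w != v & bad u w.
  case: u v => [i|j] [i'|j'] //= /andP[Eij /asboolPn nP].
  - have /existsNP [j /not_implyP [jj' nPj]] : ~ (forall j, j != j' -> P i j).
      by move/(P_at_I _ _ Eij).
    exists (inr j); first by rewrite (inj_eq inr_inj).
    by rewrite /= edge_of_notP // asboolF.
  - have /existsNP [i /not_implyP [ii' nPi]] : ~ (forall i, i != i' -> P i j).
      by move/(P_at_J _ _ Eij).
    exists (inl i); first by rewrite (inj_eq inl_inj).
    by rewrite /= edge_of_notP // asboolF.
move=> i j; apply: contrapT => nP.
have := leafless_acyclic_empty bad_sym bad_irr bad_acyclic bad_leafless (inl i) (inr j).
by rewrite /= edge_of_notP // asboolF.
Qed.

End BipartiteTree.

Section Calculus.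
Variable R : realType.
Notation mu := (@lebesgue_measure R).
Implicit Types (f g : R -> R) (s t u c T L : R).

Definition bounded_upto f T := exists M, forall s, 0 <= s <= T -> `|f s| <= M.

Lemma meas_locbdd_integrable f T (D : set R) : meas_locbdd f -> 0 <= T ->
  measurable D -> D `<=` `[0, T] -> mu.-integrable D (EFin \o f).
Proof.
move=> [mf bdd_f] T0 mD DT; have [M hM] := bdd_f T T0.
apply: measurable_bounded_integrable => //.
- have muT : (lebesgue_measure `[0%R, T] < +oo)%E.
    by rewrite lebesgue_measure_itv; case: ifP => _ //; exact: ltry.
  by apply: le_lt_trans (le_measure mu _ _ DT) muT; rewrite ?inE.
- apply: measurable_funS mf => // s /DT; rewrite /= !in_itv /= andbT.
  by case/andP.
- exists M; split; first exact: num_real.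
  by move=> M' MM' s /DT; rewrite /= in_itv /= => /hM /le_trans; apply; exact: ltW.
Qed.

Lemma meas_locbdd_integrable0 f T : meas_locbdd f -> 0 <= T ->
  mu.-integrable `[0, T] (EFin \o f).
Proof. by move=> mf T0; apply: meas_locbdd_integrable mf T0 _ _. Qed.

Lemma meas_locbdd_cst (k : R) : meas_locbdd (fun=> k).
Proof. by split; [exact: measurable_cst | exists `|k|]. Qed.

Lemma meas_locbddD f g : meas_locbdd f -> meas_locbdd g ->
  meas_locbdd (fun s => f s + g s).
Proof.
move=> [mf bf] [mg bg]; split; first exact: measurable_realfun.measurable_funD.
move=> t t0; have [M1 h1] := bf t t0; have [M2 h2] := bg t t0.
by exists (M1 + M2) => s hs; rewrite (le_trans (ler_normD _ _)) ?lerD ?h1 ?h2.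
Qed.

Lemma meas_locbddN f : meas_locbdd f -> meas_locbdd (fun s => - f s).
Proof.
move=> [mf bf]; split; first exact: measurable_realfun.measurable_funN.
by move=> t t0; have [M hM] := bf t t0; exists M => s /hM; rewrite normrN.
Qed.

Lemma meas_locbdd_sum (I : Type) (r : seq I) (F : I -> R -> R) :
  (forall i, meas_locbdd (F i)) -> meas_locbdd (fun s => \sum_(i <- r) F i s).
Proof.
move=> hF; elim: r => [|a r IH].
  by under eq_fun do rewrite big_nil; exact: meas_locbdd_cst.
by under eq_fun do rewrite big_cons; exact: meas_locbddD.
Qed.

Lemma eq_integ0 f g s : (forall u, 0 <= u <= s -> f u = g u) ->
  integ0 f s = integ0 g s.
Proof. by move=> fg; apply: eq_Rintegral => u; rewrite inE /= in_itv; exact: fg. Qed.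

Lemma integ0_at0 f : integ0 f 0 = 0.
Proof. by rewrite /integ0 set_itv1 Rintegral_set1. Qed.

Lemma integ0_cst0 s : integ0 (fun=> 0) s = 0.
Proof. by rewrite /integ0 Rintegral_cst ?mul0r. Qed.

Lemma integ0D f g s : meas_locbdd f -> meas_locbdd g -> 0 <= s ->
  integ0 (fun u => f u + g u) s = integ0 f s + integ0 g s.
Proof.
by move=> mf mg s0; rewrite /integ0 RintegralD // meas_locbdd_integrable0.
Qed.

Lemma integ0N f s : meas_locbdd f -> 0 <= s ->
  integ0 (fun u => - f u) s = - integ0 f s.
Proof.
move=> mf s0; rewrite -mulN1r /integ0 -RintegralZl ?meas_locbdd_integrable0 //.
by apply: eq_Rintegral => u _; rewrite mulN1r.
Qed.

Lemma integ0_sum (I : Type) (r : seq I) (F : I -> R -> R) s :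
  (forall i, meas_locbdd (F i)) -> 0 <= s ->
  integ0 (fun u => \sum_(i <- r) F i u) s = \sum_(i <- r) integ0 (F i) s.
Proof.
move=> hF s0; elim: r => [|a r IH].
  by rewrite big_nil -[RHS](integ0_cst0 s); apply: eq_integ0 => u _; rewrite big_nil.
rewrite big_cons -IH -integ0D //; last exact: meas_locbdd_sum.
by apply: eq_integ0 => u _; rewrite big_cons.
Qed.

Lemma integ0B_le f u c L : meas_locbdd f -> 0 <= u <= c ->
  (forall s, u < s <= c -> f s <= L) -> integ0 f c - integ0 f u <= L * (c - u).
Proof.
move=> mf /andP[u0 uc] fL; have c0 := le_trans u0 uc.
have mD : measurable `]u, c] by [].
have Dc : `]u, c] `<=` `[0, c].
  by move=> s; rewrite /= !in_itv /= => /andP[us ->]; rewrite (le_trans u0 (ltW us)).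
rewrite /integ0 Rintegral_itvB ?meas_locbdd_integrable0 //=.
have int_f := meas_locbdd_integrable mf c0 mD Dc.
have int_L : mu.-integrable `]u, c] (EFin \o fun=> L).
  apply: meas_locbdd_integrable c0 mD Dc; exact: meas_locbdd_cst.
apply: le_trans (le_Rintegral _ int_f int_L _) _ => //.
have mu_uc : lebesgue_measure `]u, c] = (c - u)%:E.
  by rewrite lebesgue_measure_itv /= lte_fin; case: ltgtP uc => // ->; rewrite subrr.
rewrite Rintegral_cst //.
by have -> : fine (lebesgue_measure `]u, c]) = c - u by rewrite mu_uc.
Qed.

Lemma integ0_lipschitz f u c L : meas_locbdd f -> 0 <= u <= c ->
  (forall s, u < s <= c -> `|f s| <= L) -> `|integ0 f c - integ0 f u| <= L * (c - u).
Proof.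
move=> mf uc fL; have [u0 u_c] := andP uc; have c0 := le_trans u0 u_c.
have up : integ0 f c - integ0 f u <= L * (c - u).
  by apply: integ0B_le mf uc _ => s /fL; apply: le_trans; exact: ler_norm.
have : integ0 (fun s => - f s) c - integ0 (fun s => - f s) u <= L * (c - u).
  apply: integ0B_le (meas_locbddN mf) uc _ => s /fL.
  by rewrite -normrN; apply: le_trans; exact: ler_norm.
by rewrite !integ0N // ler_norml up andbT => low; lra.
Qed.

Lemma integ0_bounded_upto f T : meas_locbdd f -> 0 <= T -> bounded_upto (integ0 f) T.
Proof.
move=> mf T0; have [L hL] := mf.2 T T0.
have L0 : 0 <= L by apply: le_trans (hL 0 _); rewrite ?lexx.
exists (L * T) => s /andP[s0 sT].
have := @integ0_lipschitz f 0 s L mf; rewrite lexx s0 integ0_at0 !subr0 => /(_ isT).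
move=> /(_ _)/le_trans; apply; last exact: ler_wpM2l.
by move=> u /andP[u0 us]; rewrite hL // (ltW u0) (le_trans us).
Qed.

Lemma integ0_ode_ub f m G T : 0 < m -> 0 <= G -> meas_locbdd f -> 0 <= T ->
  (forall s, 0 <= s <= T -> f s + m * integ0 f s <= G) ->
  forall s, 0 <= s <= T -> integ0 f s <= G / m.
Proof.
move=> m0 G0 mf T0 fG; set X := integ0 f; set K := G / m.
have K0 : 0 <= K by rewrite divr_ge0 // ltW.
have mK : m * K = G by rewrite /K mulrC divfK // gt_eqF.
have X_cont := parameterized_integral_continuous T0 (meas_locbdd_integrable0 mf T0).
have [c] := EVT_max T0 X_cont; rewrite in_itv /= => /andP[c0 cT] X_max.
suff XcK : X c <= K by move=> s sT; apply: le_trans (X_max s _) XcK; rewrite in_itv.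
rewrite leNgt; apply/negP => KXc.
have [d dE d0] : exists2 d, d = X c - K & 0 < d by exists (X c - K); rewrite ?subr_gt0.
have c_pos : 0 < c.
  by rewrite lt_def c0 andbT; apply: contraTneq KXc => ->; rewrite /X integ0_at0 -leNgt.
have [L fL] := mf.2 T T0.
have L0 : 0 <= L by apply: le_trans (fL 0 _); rewrite ?lexx.
(* Just left of the maximum point c, X stays above K + d/2 by the Lipschitz bound,
   so f <= - m d/2 there and X (c - h) > X c, contradicting maximality. *)
set h := Num.min c (d / (2 * (L + 1))).
have h0 : 0 < h by rewrite lt_min c_pos divr_gt0 // mulr_gt0 // ltr_wpDl.
have ch : 0 <= c - h <= c by rewrite subr_ge0 ge_min lexx /= gerBl ltW.
have hLd : h * (2 * (L + 1)) <= d.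
  by rewrite -ler_pdivlMr ?mulr_gt0 ?ltr_wpDl // ge_min lexx orbT.
have f_neg u : c - h < u <= c -> f u <= - (m * d / 2).
  case/andP=> hu uc; have u0 : 0 <= u by apply: le_trans (ltW hu); case/andP: ch.
  have uT : 0 <= u <= T by rewrite u0 (le_trans uc cT).
  have : `|X c - X u| <= L * (c - u).
    apply: integ0_lipschitz mf _ _ => [|s /andP[us sc]]; first by rewrite u0.
    by apply: fL; rewrite (le_trans u0 (ltW us)) (le_trans sc cT).
  have : L * (c - u) <= L * h by rewrite ler_wpM2l // lerBlDr -lerBlDl ltW.
  move=> Lh /ler_normlP[_ XcXu].
  have XuK : K + d / 2 <= X u by lra.
  have := fG u uT; rewrite -/X -mK.
  have : 0 <= m * (X u - (K + d / 2)) by rewrite mulr_ge0 ?subr_ge0 // ltW.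
  lra.
have := integ0B_le mf ch f_neg; rewrite -/X.
have : X (c - h) <= X c by apply: X_max; rewrite in_itv /= (andP ch).1 (le_trans _ cT) ?(andP ch).2.
have : 0 < m * d * h by rewrite !mulr_gt0.
nra.
Qed.

Lemma integ0_ode_bound f m G T : 0 < m -> 0 <= G -> meas_locbdd f -> 0 <= T ->
  (forall s, 0 <= s <= T -> `|f s + m * integ0 f s| <= G) ->
  forall s, 0 <= s <= T -> `|integ0 f s| <= G / m.
Proof.
move=> m0 G0 mf T0 fG.
have up := integ0_ode_ub m0 G0 mf T0 (fun u uT => le_trans (ler_norm _) (fG u uT)).
have low : forall s, 0 <= s <= T -> integ0 (fun u => - f u) s <= G / m.
  apply: integ0_ode_ub (meas_locbddN mf) T0 _ => // u uT.
  rewrite integ0N ?(andP uT).1 // mulrN -opprD.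
  by apply: le_trans (ler_norm _) _; rewrite normrN fG.
move=> s sT; rewrite ler_norml up // andbT lerNl -integ0N ?(andP sT).1 //.
exact: low.
Qed.

Lemma le_supnorm (nf : R -> R) t B s :
  (forall u, 0 <= u <= t -> nf u <= B) -> 0 <= s <= t -> nf s <= supnorm nf t.
Proof.
move=> nfB st; apply: sup_upper_bound; last by exists s => //=; rewrite in_itv.
split; first by exists (nf s), s => //=; rewrite in_itv.
by exists B => _ [u ut <-]; apply: nfB; move: ut; rewrite /= in_itv.
Qed.

Lemma le_supnorm_sum (I : finType) (F : I -> R -> R) t :
  (forall i, bounded_upto (F i) t) ->
  forall i s, 0 <= s <= t -> `|F i s| <= supnorm (fun u => \sum_k `|F k u|) t.
Proof.
move=> /fin_all_exists [M FM] i s st.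
apply: le_trans (le_supnorm (B := \sum_k M k) _ st).
  by rewrite (bigD1 i) //= lerDl sumr_ge0.
by move=> u ut; apply: ler_sum => k _; exact: FM.
Qed.

Lemma supnorm_sum_ge0 (I : finType) (F : I -> R -> R) t : 0 <= t ->
  (forall i, bounded_upto (F i) t) -> 0 <= supnorm (fun u => \sum_k `|F k u|) t.
Proof.
move=> t0 /fin_all_exists [M FM].
apply: le_trans (le_supnorm (B := \sum_k M k) _ (s := 0) _); rewrite ?lexx ?t0 //.
  exact: sumr_ge0.
by move=> u ut; apply: ler_sum => k _; exact: FM.
Qed.

End Calculus.

Section Estimate.
Variables (R : realType) (nI nJ : nat) (E : 'I_nI -> 'I_nJ -> bool).
Variables (mu : 'I_nI -> 'I_nJ -> R) (theta : 'I_nI -> R).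
Hypothesis mu_pos : forall i j, E i j -> 0 < mu i j.

Record data := Data {
  dw : 'I_nI -> R -> R; dx : 'I_nI -> R -> R; dy : 'I_nI -> R -> R;
  dz : 'I_nJ -> R -> R; dpsi : 'I_nI -> 'I_nJ -> R -> R }.

Record solution (d : data) : Prop := Solution {
  w_locbdd : forall i, meas_locbdd (dw d i);
  x_locbdd : forall i, meas_locbdd (dx d i);
  y_locbdd : forall i, meas_locbdd (dy d i);
  z_locbdd : forall j, meas_locbdd (dz d j);
  psi_locbdd : forall i j, meas_locbdd (dpsi d i j);
  psi_non_edge : forall i j t, ~~ E i j -> 0 <= t -> dpsi d i j t = 0;
  x_eq : forall i t, 0 <= t -> dx d i t = dw d i t
    - \sum_(j < nJ) mu i j * integ0 (dpsi d i j) t - theta i * integ0 (dy d i) t;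
  sum_psi_J : forall i t, 0 <= t -> \sum_(j < nJ) dpsi d i j t = dx d i t - dy d i t;
  sum_psi_I : forall j t, 0 <= t -> \sum_(i < nI) dpsi d i j t = - dz d j t }.

Definition input_norm (d : data) T :=
  supnorm (fun s => \sum_(i < nI) `|dw d i s|) T
  + supnorm (fun s => \sum_(i < nI) `|integ0 (dy d i) s|) T
  + supnorm (fun s => \sum_(j < nJ) `|integ0 (dz d j) s|) T.

Lemma input_bounded_upto d T : solution d -> 0 <= T ->
  [/\ forall i, bounded_upto (dw d i) T,
      forall i, bounded_upto (integ0 (dy d i)) T
    & forall j, bounded_upto (integ0 (dz d j)) T].
Proof.
move=> sol T0; split=> k; first exact: (w_locbdd sol k).2.
  exact: integ0_bounded_upto (y_locbdd sol k) T0.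
exact: integ0_bounded_upto (z_locbdd sol k) T0.
Qed.

Lemma input_norm_ge0 d T : solution d -> 0 <= T -> 0 <= input_norm d T.
Proof.
move=> sol T0; have [w_bdd y_bdd z_bdd] := input_bounded_upto sol T0.
by rewrite !addr_ge0 // supnorm_sum_ge0.
Qed.

Lemma input_norm_ub d T s : solution d -> 0 <= s <= T ->
  [/\ forall i, `|dw d i s| <= input_norm d T,
      forall i, `|integ0 (dy d i) s| <= input_norm d T
    & forall j, `|integ0 (dz d j) s| <= input_norm d T].
Proof.
move=> sol sT; have T0 := le_trans (andP sT).1 (andP sT).2.
have [w_bdd y_bdd z_bdd] := input_bounded_upto sol T0.
have := supnorm_sum_ge0 T0 w_bdd.
have := supnorm_sum_ge0 T0 y_bdd; have := supnorm_sum_ge0 T0 z_bdd.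
rewrite /input_norm => z0 y0 w0; split=> k.
- by have := le_supnorm_sum w_bdd k sT; lra.
- by have := le_supnorm_sum y_bdd k sT; lra.
- by have := le_supnorm_sum z_bdd k sT; lra.
Qed.

(* Bounding on all of [0, T] by the norm at T gives the ODE lemma a constant bound. *)
Definition controlled (F : data -> R -> R) := exists2 C, 0 <= C &
  forall d, solution d -> forall T s, 0 <= s <= T -> `|F d s| <= C * input_norm d T.

Lemma eq_controlled F G :
  (forall d, solution d -> forall s, 0 <= s -> F d s = G d s) ->
  controlled G -> controlled F.
Proof.
move=> FG [C C0 GC]; exists C => // d sol T s sT.
by rewrite FG //; [exact: GC | case/andP: sT].
Qed.

Lemma controlled0 : controlled (fun _ _ => 0).
Proof. by exists 0 => // d sol T s sT; rewrite normr0 mul0r. Qed.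

Lemma controlledD F G : controlled F -> controlled G ->
  controlled (fun d s => F d s + G d s).
Proof.
move=> [C1 C10 FC] [C2 C20 GC]; exists (C1 + C2) => [|d sol T s sT].
  exact: addr_ge0.
by rewrite mulrDl (le_trans (ler_normD _ _)) // lerD ?FC ?GC.
Qed.

Lemma controlledZ (k : R) F : controlled F -> controlled (fun d s => k * F d s).
Proof.
move=> [C C0 FC]; exists (`|k| * C) => [|d sol T s sT]; first exact: mulr_ge0.
by rewrite normrM -mulrA ler_wpM2l // FC.
Qed.

Lemma controlledN F : controlled F -> controlled (fun d s => - F d s).
Proof.
by move=> /(controlledZ (-1)); apply: eq_controlled => d _ s _; rewrite mulN1r.
Qed.

Lemma controlledB F G : controlled F -> controlled G ->
  controlled (fun d s => F d s - G d s).
Proof. by move=> cF /controlledN; exact: controlledD. Qed.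

Lemma controlled_norm F : controlled F -> controlled (fun d s => `|F d s|).
Proof. by move=> [C C0 FC]; exists C => // d sol T s sT; rewrite normr_id FC. Qed.

Lemma controlled_sum (I : Type) (r : seq I) (P : pred I) (F : I -> data -> R -> R) :
  (forall i, P i -> controlled (F i)) ->
  controlled (fun d s => \sum_(i <- r | P i) F i d s).
Proof.
move=> cF; elim: r => [|a r IH].
  by apply: eq_controlled controlled0 => d _ s _; rewrite big_nil.
have [Pa|nPa] := boolP (P a).
  by apply: eq_controlled (controlledD (cF a Pa) IH) => d _ s _; rewrite big_cons Pa.
by apply: eq_controlled IH => d _ s _; rewrite big_cons (negbTE nPa).
Qed.

Lemma controlled_w i : controlled (fun d => dw d i).
Proof.
by exists 1 => // d sol T s sT; rewrite mul1r; case: (input_norm_ub sol sT).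
Qed.

Lemma controlled_integ0_y i : controlled (fun d => integ0 (dy d i)).
Proof.
by exists 1 => // d sol T s sT; rewrite mul1r; case: (input_norm_ub sol sT).
Qed.

Lemma controlled_integ0_z j : controlled (fun d => integ0 (dz d j)).
Proof.
by exists 1 => // d sol T s sT; rewrite mul1r; case: (input_norm_ub sol sT).
Qed.

Lemma controlled_integ0_ode (f : data -> R -> R) m : 0 < m ->
  (forall d, solution d -> meas_locbdd (f d)) ->
  controlled (fun d s => f d s + m * integ0 (f d) s) ->
  controlled (fun d => integ0 (f d)).
Proof.
move=> m0 mf [C C0 hC]; exists (C / m) => [|d sol T s sT].
  by rewrite divr_ge0 // ltW.
have T0 := le_trans (andP sT).1 (andP sT).2.
have G0 := mulr_ge0 C0 (input_norm_ge0 sol T0).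
rewrite mulrAC; apply: (integ0_ode_bound m0 G0 (mf d sol) T0) => // u uT.
exact: hC.
Qed.

Definition Psi i j (d : data) := integ0 (dpsi d i j).

Lemma sum_Psi_J d i s : solution d -> 0 <= s ->
  \sum_(j < nJ) Psi i j d s = integ0 (dx d i) s - integ0 (dy d i) s.
Proof.
move=> sol s0; have mpsi := psi_locbdd sol i.
have mx := x_locbdd sol i; have my := y_locbdd sol i; have mNy := meas_locbddN my.
rewrite /Psi -integ0_sum // -integ0N // -integ0D //.
by apply: eq_integ0 => u /andP[u0 _]; rewrite (sum_psi_J sol).
Qed.

Lemma sum_Psi_I d j s : solution d -> 0 <= s ->
  \sum_(i < nI) Psi i j d s = - integ0 (dz d j) s.
Proof.
move=> sol s0; have mpsi i := psi_locbdd sol i j; have mz := z_locbdd sol j.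
rewrite /Psi -integ0_sum // -integ0N //.
by apply: eq_integ0 => u /andP[u0 _]; rewrite (sum_psi_I sol).
Qed.

Lemma controlled_Psi_at_J i j :
  (forall i', i' != i -> controlled (Psi i' j)) -> controlled (Psi i j).
Proof.
move=> others; apply: (eq_controlled (G := fun d s =>
  - integ0 (dz d j) s - \sum_(i' < nI | i' != i) Psi i' j d s)).
  by move=> d sol s s0; rewrite -(sum_Psi_I j sol s0) (bigD1 i) //= addrK.
exact: controlledB (controlledN (controlled_integ0_z j)) (controlled_sum _ others).
Qed.

Lemma controlled_Psi_at_I i j : E i j ->
  (forall j', j' != j -> controlled (Psi i j')) -> controlled (Psi i j).
Proof.
move=> Eij others.
pose A d s := integ0 (dy d i) s + \sum_(j' < nJ | j' != j) Psi i j' d s.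
have cA : controlled A := controlledD (controlled_integ0_y i) (controlled_sum _ others).
have X_split d s : solution d -> 0 <= s -> integ0 (dx d i) s = Psi i j d s + A d s.
  by move=> sol s0; have := sum_Psi_J i sol s0; rewrite (bigD1 j) //= /A; lra.
(* In x_i + mu_ij 𝔍x_i the unknown Psi_ij cancels. *)
have cX : controlled (fun d => integ0 (dx d i)).
  apply: (controlled_integ0_ode (mu_pos Eij) (fun d sol => x_locbdd sol i)).
  apply: (eq_controlled (G := fun d s => dw d i s + mu i j * A d s
    - \sum_(j' < nJ | j' != j) mu i j' * Psi i j' d s - theta i * integ0 (dy d i) s)).
    by move=> d sol s s0; rewrite X_split // (x_eq sol) // (bigD1 j) //= /Psi; ring.
  apply: controlledB (controlledZ _ (controlled_integ0_y i)).
  apply: controlledB (controlledD (controlled_w i) (controlledZ _ cA)) _.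
  by apply: controlled_sum => j' /others; exact: controlledZ.
apply: (eq_controlled (G := fun d s => integ0 (dx d i) s - A d s)) (controlledB cX cA).
by move=> d sol s s0; rewrite X_split // addrK.
Qed.

Lemma controlled_Psi : acyclicG E -> forall i j, controlled (Psi i j).
Proof.
move=> acyclicE; apply: (tree_edge_ind (P := fun i j => controlled (Psi i j)) acyclicE);
  [|exact: controlled_Psi_at_I | by move=> i j _; exact: controlled_Psi_at_J].
move=> i j nE; apply: eq_controlled controlled0 => d sol s s0.
by rewrite /Psi -(integ0_cst0 s); apply: eq_integ0 => u /andP[u0 _]; rewrite psi_non_edge.
Qed.

Lemma controlled_x : acyclicG E -> forall i, controlled (fun d => dx d i).
Proof.
move=> acyclicE i; apply: (eq_controlled (G := fun d s => dw d i s
  - \sum_(j < nJ) mu i j * Psi i j d s - theta i * integ0 (dy d i) s)).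
  by move=> d sol s s0; rewrite (x_eq sol).
apply: controlledB (controlledZ _ (controlled_integ0_y i)).
apply: controlledB (controlled_w i) _.
by apply: controlled_sum => j _; exact/controlledZ/controlled_Psi.
Qed.

Lemma controlled_solution_norm : acyclicG E ->
  controlled (fun d t => \sum_(i < nI) \sum_(j < nJ) `|Psi i j d t|
                         + \sum_(i < nI) `|dx d i t|).
Proof.
move=> acyclicE; apply: controlledD; apply: controlled_sum => i _.
  by apply: controlled_sum => j _; exact/controlled_norm/controlled_Psi.
exact/controlled_norm/controlled_x.
Qed.

End Estimate.

Theorem proposition1 (R : realType) (nI nJ : nat)
  (E : 'I_nI -> 'I_nJ -> bool) (mu : 'I_nI -> 'I_nJ -> R) (theta : 'I_nI -> R) :
  is_tree E ->
  (forall i j, E i j -> 0 < mu i j) ->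
  (forall i j, ~~ E i j -> mu i j = 0) ->
  (forall i, 0 <= theta i) ->
  exists m1 : R,
  forall (w x y : 'I_nI -> R -> R) (z : 'I_nJ -> R -> R)
         (psi : 'I_nI -> 'I_nJ -> R -> R),
    (forall i, meas_locbdd (w i)) ->
    (forall i, meas_locbdd (x i)) ->
    (forall i, meas_locbdd (y i)) ->
    (forall j, meas_locbdd (z j)) ->
    (forall i j, meas_locbdd (psi i j)) ->
    (forall i j t, ~~ E i j -> 0 <= t -> psi i j t = 0) ->
    (forall i t, 0 <= t ->
       x i t = w i t - \sum_(j < nJ) mu i j * integ0 (psi i j) t
               - theta i * integ0 (y i) t) ->
    (forall i t, 0 <= t -> \sum_(j < nJ) psi i j t = x i t - y i t) ->
    (forall j t, 0 <= t -> \sum_(i < nI) psi i j t = - z j t) ->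
    forall t, 0 <= t ->
      \sum_(i < nI) \sum_(j < nJ) `|integ0 (psi i j) t|
        + \sum_(i < nI) `|x i t|
      <= m1 * (supnorm (fun s => \sum_(i < nI) `|w i s|) t
               + supnorm (fun s => \sum_(i < nI) `|integ0 (y i) s|) t
               + supnorm (fun s => \sum_(j < nJ) `|integ0 (z j) s|) t).
Proof.
move=> [_ [_ acyclicE]] mu_pos _ _.
have [C _ C_bound] := controlled_solution_norm theta mu_pos acyclicE.
exists C => w x y z psi ? ? ? ? ? ? ? ? ? t t0.
apply: le_trans (ler_norm _) (C_bound (Data w x y z psi) _ t t _).
  exact: Solution.
by rewrite t0 lexx.
Qed.
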